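(* Assume the standing hypotheses described in the context. Take $\theta\ge0$, $0\le t\le\lambda$, and $x_*,x,y\in\mathbb X$. If $\lambda<R$, $\|x-x_0\|\le t$, $\|x_*-x\|\le\lambda-t$, $F(x_* )=0$ and \[\|F'(x_0)^{-1}[F(x)+F'(x)(y-x)]\|\le\theta\|F'(x_0)^{-1}F(x)\|,\] then \[\|x_*-y\|\le\Big[\frac{1+\theta}{2}+\frac{2\theta}{\kappa}\Big]\|x_*-x\|,\] \[\|x_*-y\|\le\Big[\frac{1+\theta}{2}\frac{D^-f'(\lambda)}{|f'(\lambda)|}\|x_*-x\|+\theta\,\frac{2+f'(\lambda)}{|f'(\lambda)|}\Big]\|x_*-x\|.\]
   Context: Standing hypotheses: $\mathbb X,\mathbb Y$ are Banach spaces; $B(x,r)$ is the open ball. $R\in\mathbb R$, $C\subseteq\mathbb X$, $F:C\to\mathbb Y$ is continuous and continuously differentiable on $\mathrm{int}(C)$, $x_0\in\mathrm{int}(C)$ with $F'(x_0)$ non-singular, $f:[0,R)\to\mathbb R$ is continuously differentiable, $B(x_0,R)\subseteq C$, $\|F'(x_0)^{-1}[F'(y)-F'(x)]\|\le f'(\|y-x\|+\|x-x_0\|)-f'(\|x-x_0\|)$ for all $x,y\in B(x_0,R)$ with $\|x-x_0\|+\|y-x\|<R$, $\|F'(x_0)^{-1}F(x_0)\|\le f(0)$, and (h1) $f(0)>0$, $f'(0)=-1$; (h2) $f'$ is strictly increasing and convex; (h3) $f(t)<0$ for some $t\in(0,R)$. Notation: $\kappa:=\sup_{0<t<R}\frac{-f(t)}{t}$,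 $\lambda:=\sup\{t\in[0,R):\kappa+f'(t)<0\}$; $D^-f'(\lambda)$ is the left derivative of $f'$ at $\lambda$. *)

From HB Require Import structures.
From mathcomp Require Import all_boot all_order all_algebra.
From mathcomp Require Import all_classical all_reals all_analysis.
Set Implicit Arguments. Unset Strict Implicit. Unset Printing Implicit Defensive.
Import Order.TTheory GRing.Theory Num.Theory.
Import numFieldNormedType.Exports.
Local Open Scope classical_set_scope.
Local Open Scope ring_scope.

Definition is_derivative_on {R : realType} (f df : R -> R) (rad : R) : Prop :=
  forall t, 0 <= t < rad ->
    (fun s => (f s - f t) / (s - t)) @ within (fun s => 0 <= s < rad) t^'
      --> df t.

Definition kappa {R : realType} (f : R -> R) (rad : R) : R :=
  sup [set - f t / t | t in [set t | 0 < t < rad]].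

Definition lambda {R : realType} (f df : R -> R) (rad : R) : R :=
  sup [set t | 0 <= t < rad /\ kappa f rad + df t < 0].

Definition left_deriv {R : realType} (g : R -> R) (l : R) : R :=
  lim ((fun s => (g s - g l) / (s - l)) @ l^'-).

From HB Require Import structures.
From mathcomp Require Import all_boot all_order all_algebra.
From mathcomp Require Import all_classical all_reals all_analysis.
From mathcomp Require Import ring lra.
Set Implicit Arguments. Unset Strict Implicit. Unset Printing Implicit Defensive.
Import Order.TTheory GRing.Theory Num.Theory.
Import numFieldNormedType.Exports.
Local Open Scope classical_set_scope.
Local Open Scope ring_scope.

(** Let [s = |x - x0|], [u = |xs - x|] and let [e] be the linearization error
    [|F'(x0)^-1 (F xs - F x - F'(x) (xs - x))|].  The majorant condition with
    [f'(0) = -1] gives [-f'(s) |v| <= |F'(x0)^-1 F'(x) v| <= (2 + f'(s)) |v|], so the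
    residual hypothesis yields [-f'(s) |xs - y| <= (1 + theta) e + theta (2 + f'(s)) u].
    A mean value inequality along [[x, xs]] bounds [e] by half the increment of the
    majorant: [e <= (f'(s + u) - f'(s)) u / 2] by convexity of [f'], and
    [e <= D^- f'(lambda) u^2 / 2] since the chord slopes of [f'] below [lambda] are at
    most [D^- f'(lambda)].  As [s + u <= lambda], [f'(s) <= f'(lambda) <= -kappa], and
    both estimates follow by elementary algebra.  Since [F'(x0)^-1] is only given as
    an algebraic inverse, its boundedness comes from the bounded inverse theorem. *)

Section locally_nonincreasing.
Variable R : realType.
Implicit Types (a b s : R) (chi : R -> R).

Lemma real_induction (P : R -> Prop) a b : a <= b -> P a ->
  (forall s, a < s <= b -> (forall x, a <= x < s -> P x) -> P s) ->
  (forall s, a <= s < b -> P s -> exists2 d : R, 0 < d & forall x, s < x < s + d -> P x) ->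
  forall s, a <= s <= b -> P s.
Proof.
move=> ab Pa Hcl Hst.
pose A := [set s | a <= s <= b /\ forall x, a <= x <= s -> P x].
have Aa : A a.
  split; first by rewrite lexx ab.
  by move=> x xa; have -> : x = a by apply/eqP; rewrite eq_le andbC.
have hA : has_sup A by split; [exists a | exists b => s [/andP[]]].
set m := sup A.
have am : a <= m by apply: sup_upper_bound.
have mb : m <= b by apply: ge_sup; [exists a | move=> s [/andP[]]].
have Pbelow x : a <= x < m -> P x.
  case/andP=> ax xm.
  have [s As xs] := sup_adherent (ltac:(by rewrite subr_gt0) : 0 < m - x) hA.
  move: xs; rewrite -/m opprB addrC subrK => xs.
  by case: As => _; apply; rewrite ax ltW.
have Pm : P m.
  have [<-|am'] := eqVneq a m; first exact: Pa.
  by apply: Hcl => //; rewrite lt_neqAle am' am mb.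
have Am : A m.
  split; first by rewrite am mb.
  move=> x /andP[ax]; rewrite le_eqVlt => /orP[/eqP ->//|xm].
  by apply: Pbelow; rewrite ax.
suff <- : m = b by move=> s /andP[as' sb]; case: Am => _; apply; rewrite as'.
apply/eqP; rewrite eq_le mb /= leNgt; apply/negP => mlb.
have [d d0 Hd] := Hst m ltac:(by rewrite am mlb) Pm.
pose s' := Num.min (m + d / 2) b.
have ms' : m < s' by rewrite /s' lt_min mlb andbT ltrDl divr_gt0.
suff As' : A s' by have := sup_upper_bound hA As'; rewrite -/m leNgt ms'.
split.
  rewrite /s' le_min ge_min lexx orbT !andbT.
  by rewrite (le_trans am) // ltW // ltrDl divr_gt0.
move=> x /andP[ax xs']; have [xm|mx] := leP x m.
  by case: Am => _; apply; rewrite ax.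
apply: Hd; rewrite mx /=; apply: le_lt_trans xs' _.
by rewrite /s' gt_min; apply/orP; left; lra.
Qed.

Definition locally_nonincreasing chi a b :=
  forall s, a <= s <= b -> forall e : R, 0 < e -> exists2 d : R, 0 < d &
    forall q, a <= q <= b -> `|q - s| < d ->
      (s <= q -> chi q - chi s <= e * (q - s)) /\
      (q <= s -> chi s - chi q <= e * (s - q)).

Lemma locally_nonincreasing_le chi a b : a <= b ->
  locally_nonincreasing chi a b -> chi b <= chi a.
Proof.
move=> ab chiloc; apply/ler_addgt0Pr => e e0.
pose eps := e / (b - a + 1).
have eps0 : 0 < eps by rewrite divr_gt0 //; lra.
have epsba : eps * (b - a) <= e.
  rewrite /eps mulrAC ler_pdivrMr; last lra.
  by rewrite ler_pM2l //; lra.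
pose P s := chi s <= chi a + eps * (s - a).
suff : P b by rewrite /P; lra.
apply: (@real_induction P a b ab); rewrite /P ?subrr ?mulr0 ?addr0 ?lexx ?andbT //.
- move=> s /andP[a_s sb] Pbelow.
  have [d d0 Hd] := chiloc s ltac:(by rewrite ltW) eps eps0.
  pose q := s - Num.min d (s - a) / 2.
  have mind : Num.min d (s - a) <= d by rewrite ge_min lexx.
  have mins : Num.min d (s - a) <= s - a by rewrite ge_min lexx orbT.
  have min0 : 0 < Num.min d (s - a) by rewrite lt_min d0 subr_gt0.
  have [_ Hq] := Hd q ltac:(rewrite /q; apply/andP; split; lra)
    ltac:(rewrite /q addrAC subrr sub0r normrN ger0_norm; lra).
  have := Pbelow q ltac:(rewrite /q; apply/andP; split; lra).
  have := Hq ltac:(rewrite /q; lra); lra.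
- move=> s /andP[a_s sb] Ps.
  have [d d0 Hd] := chiloc s ltac:(by rewrite a_s ltW) eps eps0.
  exists (Num.min d (b - s)); first by rewrite lt_min d0 subr_gt0.
  move=> x /andP[sx xsd].
  have mind : Num.min d (b - s) <= d by rewrite ge_min lexx.
  have minb : Num.min d (b - s) <= b - s by rewrite ge_min lexx orbT.
  have [Hx _] := Hd x ltac:(apply/andP; split; lra)
    ltac:(rewrite gtr0_norm; lra).
  have := Hx (ltW sx); lra.
Qed.

End locally_nonincreasing.

Section mean_value_inequality.
Variable R : realType.

Definition is_derive_cc {V : normedModType R} (phi D : R -> V) (a b : R) :=
  forall s, a <= s <= b -> forall e : R, 0 < e -> exists2 d : R, 0 < d &
    forall q, a <= q <= b -> `|q - s| < d ->
      `|phi q - phi s - (q - s) *: D s| <= e * `|q - s|.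

Lemma is_derive_ccB_linear (V : normedModType R) (phi D : R -> V) (w : V) a b :
  is_derive_cc phi D a b ->
  is_derive_cc (fun r => phi r - r *: w) (fun r => D r - w) a b.
Proof.
move=> dphi s sab e e0; have [d d0 Hd] := dphi s sab e e0.
exists d => // q qab qs.
suff -> : phi q - q *: w - (phi s - s *: w) - (q - s) *: (D s - w) =
          phi q - phi s - (q - s) *: D s by exact: Hd.
rewrite scalerBr [(q - s) *: w]scalerBl !opprB !addrA.
rewrite (addrAC (_ - q *: w + _) (- phi s) (q *: w)) -(addrA (_ - q *: w)) (addrC (s *: w)).
by rewrite addrA subrK (addrAC (_ + s *: w) (- phi s)) addrK.
Qed.

Lemma mean_value_inequality (V : normedModType R) (phi D : R -> V) (g dg : R -> R) a b : a <= b ->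
  is_derive_cc phi D a b -> is_derive_cc g dg a b ->
  (forall s, a <= s <= b -> `|D s| <= dg s) ->
  `|phi b - phi a| <= g b - g a.
Proof.
move=> ab dphi dg_ Dle.
pose chi s := `|phi s - phi a| - g s.
suff : chi b <= chi a by rewrite /chi subrr normr0; lra.
apply: locally_nonincreasing_le => // s sab e e0.
have e20 : 0 < e / 2 by rewrite divr_gt0.
have [d1 d10 Hphi] := dphi s sab _ e20.
have [d2 d20 Hg] := dg_ s sab _ e20.
exists (Num.min d1 d2); first by rewrite lt_min d10.
move=> q qab; rewrite lt_min => /andP[qd1 qd2].
have phiq : `|phi q - phi s| <= `|q - s| * dg s + e / 2 * `|q - s|.
  have := ler_normD (phi q - phi s - (q - s) *: D s) ((q - s) *: D s).
  rewrite subrK normrZ => /le_trans; apply.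
  rewrite addrC lerD // ?Hphi //.
  by rewrite ler_wpM2l // Dle.
have /ler_normlP[gqN gqP] : `|g q - g s - (q - s) * dg s| <= e / 2 * `|q - s|.
  exact: Hg.
have dg0 : 0 <= dg s by apply: le_trans (Dle s sab).
rewrite /chi; split => sq.
- have qsE : `|q - s| = q - s by rewrite ger0_norm ?subr_ge0.
  rewrite qsE in phiq gqN gqP.
  have : `|phi q - phi a| <= `|phi q - phi s| + `|phi s - phi a|.
    exact: ler_distD.
  lra.
- have qsE : `|q - s| = s - q by rewrite ler0_norm ?opprB ?subr_le0.
  rewrite qsE distrC in phiq; rewrite qsE in gqN gqP.
  have : `|phi s - phi a| <= `|phi s - phi q| + `|phi q - phi a|.
    exact: ler_distD.
  lra.
Qed.

Lemma is_derive_cc_half_sqr (K a b : R) : 0 <= K ->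
  is_derive_cc (fun s => K * s ^+ 2 / 2) (fun s => K * s) a b.
Proof.
move=> K0 s _ e e0; exists (2 * e / (K + 1)); first by rewrite divr_gt0 ?mulr_gt0 //; lra.
move=> q _; rewrite ltr_pdivlMr; last lra.
move=> qs; rewrite -[_ *: _]/((q - s) * (K * s)).
have -> : K * q ^+ 2 / 2 - K * s ^+ 2 / 2 - (q - s) * (K * s) = K / 2 * `|q - s| ^+ 2.
  by rewrite real_normK ?num_real //; field.
rewrite ger0_norm ?mulr_ge0 ?sqr_ge0 ?divr_ge0 // expr2 mulrA ler_wpM2r //.
have : 0 <= K * `|q - s| by rewrite mulr_ge0.
nra.
Qed.

Lemma increment_le_half (V : normedModType R) (phi D : R -> V) (K : R) :
  is_derive_cc phi D 0 1 ->
  (forall r, 0 <= r <= 1 -> `|D r| <= K * r) -> `|phi 1 - phi 0| <= K / 2.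
Proof.
move=> dphi Dle.
have K0 : 0 <= K by have := Dle 1 ltac:(by rewrite ler01 lexx); rewrite mulr1; apply: le_trans.
have := mean_value_inequality ler01 dphi (is_derive_cc_half_sqr K0) Dle.
by rewrite expr1n expr0n /= mulr1 mulr0 mul0r subr0.
Qed.

End mean_value_inequality.

Lemma half_geometric_series_le (R : realType) (V : completeNormedModType R)
    (u : V ^nat) (C : R) :
  (forall k, `|u k| <= C * (2^-1) ^+ k) ->
  cvgn (series u) /\ `|limn (series u)| <= 2 * C.
Proof.
move=> ule.
have half1 : `|(2^-1 : R)| < 1 by rewrite gtr0_norm ?invr_gt0 // invf_lt1 // ltr1n.
have C0 : 0 <= C by have := le_trans (normr_ge0 _) (ule 0); rewrite expr0 mulr1.
have cvn : cvgn [normed series u].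
  apply: (series_le_cvg (fun=> normr_ge0 _) _ ule (is_cvg_geometric_series half1)).
  by move=> k; rewrite /= mulr_ge0 // exprn_ge0 // invr_ge0.
split; first exact: normed_cvg.
apply: le_trans (lim_series_norm cvn) _.
apply: le_trans (lim_series_le cvn (is_cvg_geometric_series half1) ule) _.
rewrite (cvg_lim _ (cvg_geometric_series half1)) //.
have -> : 1 - 2^-1 = 2^-1 :> R by field.
by rewrite invrK mulrC.
Qed.

Section bounded_inverse.
Variables (R : realType) (X Y : completeNormedModType R).
Variables (T : {linear X -> Y}) (S : Y -> X).
Hypotheses (Tc : continuous T) (TK : cancel T S) (SK : cancel S T).

(* Baire: the images of the balls of radius n cover Y, so one is somewhere dense. *)
Lemma image_ball_dense_in_ball : exists n : nat, exists y0 : Y, exists2 r : R, 0 < r &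
  forall w, `|y0 - w| < r -> forall e : R, 0 < e ->
    exists v, `|v| <= n%:R /\ `|T v - w| < e.
Proof.
pose G n := [set w : Y | exists2 e : R, 0 < e &
   forall v, `|v| <= n%:R -> e <= `|T v - w|].
have Gopen n : open (G n).
  rewrite openE => w [e e0 He]; rewrite /interior.
  apply/nbhs_ballP; exists (e / 2); first by rewrite /= divr_gt0.
  move=> z; rewrite -ball_normE /= => wz; exists (e / 2); first by rewrite divr_gt0.
  move=> v /He ev.
  have : e <= `|T v - z| + `|z - w| by apply: le_trans ev (ler_distD _ _ _).
  rewrite distrC in wz; lra.
have [n Hn] : exists n, ~ dense (G n).
  apply/existsNP => Gdense.
  have /(_ setT) : dense (\bigcap_i G i) by apply: Baire => i; split.
  case=> [|| w [_ Gw]]; [by exists 0 | exact: openT |].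
  have [e e0 He] := Gw (Num.trunc `|S w|).+1 I.
  have : e <= `|T (S w) - w| by apply: He; apply: ltW; rewrite -truncn_le_nat.
  by rewrite SK subrr normr0 leNgt e0.
move: Hn => /existsNP [U /not_implyP [[y0 Uy0] /not_implyP [oU GU]]].
have /nbhs_ballP [r r0 Hr] : nbhs y0 U by move: oU; rewrite openE => /(_ _ Uy0).
exists n, y0, r => // w wr e e0.
have Uw : U w by apply: Hr; rewrite -ball_normE.
apply: contrapT => Hne; apply: GU; exists w; split => //.
exists e => // v vn; rewrite leNgt; apply/negP => ve; apply: Hne; by exists v.
Qed.

Lemma approx_preimage_le : exists2 c : R, 0 < c & forall w (e : R), 0 < e ->
  exists v, `|v| <= c * `|w| /\ `|T v - w| < e.
Proof.
have [n [y0 [r r0 Hr]]] := image_ball_dense_in_ball.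
exists ((2 * n%:R + 1) * 2 / r); first by rewrite !mulr_gt0 ?invr_gt0 // ltr_pwDr.
move=> w e e0.
have [->|wn0] := eqVneq w 0.
  by exists 0; rewrite linear0 subrr !normr0 mulr0 lexx.
have m0 : 0 < `|w| by rewrite normr_gt0.
pose a := r / (2 * `|w|).
have a0 : 0 < a by rewrite divr_gt0 // mulr_gt0.
have aw : `|a *: w| < r.
  rewrite normrZ gtr0_norm //.
  have -> : a * `|w| = r / 2 by rewrite /a; field; rewrite gt_eqF.
  lra.
have ae0 : 0 < a * e / 2 by rewrite divr_gt0 // mulr_gt0.
have [v1 [v1n Hv1]] := Hr (y0 + a *: w) ltac:(by rewrite opprD addrA subrr sub0r normrN) _ ae0.
have [v2 [v2n Hv2]] := Hr y0 ltac:(by rewrite subrr normr0) _ ae0.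
(* the difference of two preimages near [y0 + a w] and [y0] is a preimage near [a w] *)
exists (a^-1 *: (v1 - v2)); split.
  rewrite normrZ gtr0_norm ?invr_gt0 //.
  have : `|v1 - v2| <= 2 * n%:R.
    by apply: le_trans (ler_normB _ _) _; rewrite mulr2n mulrDl mul1r lerD.
  move=> H; apply: le_trans (ler_wpM2l _ H) _; first by rewrite ltW ?invr_gt0.
  have -> : a^-1 * (2 * n%:R) = (2 * n%:R) * 2 / r * `|w|.
    by rewrite /a; field; rewrite !gt_eqF.
  apply: ler_wpM2r => //; apply: ler_wpM2r; first by rewrite invr_ge0 ltW.
  apply: ler_wpM2r => //; lra.
have -> : T (a^-1 *: (v1 - v2)) - w = a^-1 *: ((T v1 - (y0 + a *: w)) - (T v2 - y0)).
  have -> : T v1 - (y0 + a *: w) - (T v2 - y0) = T v1 - T v2 - a *: w.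
    by rewrite opprD opprB !addrA (addrAC (T v1 - y0) (- (a *: w))) subrK addrAC.
  by rewrite linearZ linearB [RHS]scalerBr scalerA mulVf ?gt_eqF // scale1r.
rewrite normrZ gtr0_norm ?invr_gt0 //.
apply: (@lt_le_trans _ _ (a^-1 * (a * e / 2 + a * e / 2))).
  by rewrite ltr_pM2l ?invr_gt0 //; apply: le_lt_trans (ler_normB _ _) _; rewrite ltrD.
by rewrite -splitr mulrA mulVf ?gt_eqF // mul1r.
Qed.

Lemma bounded_inverse : exists2 c : R, 0 < c & forall w, `|S w| <= c * `|w|.
Proof.
have [c c0 Hc] := approx_preimage_le.
exists (2 * c); first by rewrite mulr_gt0.
move=> w; have [->|wn0] := eqVneq w 0.
  have -> : S 0 = 0 by rewrite -(linear0 T) TK.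
  by rewrite !normr0 mulr0.
have m0 : 0 < `|w| by rewrite normr_gt0.
set m := `|w|.
have : forall p : Y * nat, exists v,
    `|v| <= c * `|p.1| /\ `|T v - p.1| < m * (2^-1) ^+ p.2.+1.
  by move=> [w' k] /=; apply: Hc; rewrite mulr_gt0 // exprn_gt0 // invr_gt0.
move=> /choice [g Pg].
(* successive corrections: [ws k] is what remains of [w] after [k] steps *)
pose fix ws k := if k is k'.+1 then ws k' - T (g (ws k', k')) else w.
pose vs k := g (ws k, k).
have wsb k : `|ws k| <= m * (2^-1) ^+ k.
  case: k => [|k]; first by rewrite expr0 mulr1.
  by have [_ /ltW] := Pg (ws k, k); rewrite /= -normrN opprB.
have vsb k : `|vs k| <= c * m * (2^-1) ^+ k.
  have [H _] := Pg (ws k, k); apply: le_trans H _.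
  by rewrite /= -mulrA; apply: ler_wpM2l; [exact: ltW | exact: wsb].
have Tser k : T (series vs k) = w - ws k.
  elim: k => [|k IH]; first by rewrite seriesEnat /= big_geq // linear0 subrr.
  by rewrite seriesSr linearD IH /= /vs opprB addrA addrAC.
have [cv vle] := half_geometric_series_le vsb.
set v := limn (series vs) in vle.
suff Tv : T v = w by rewrite -mulrA -Tv TK.
have cvg_Tv : (fun k => w - ws k) @ \oo --> T v.
  have -> : (fun k => w - ws k) = T \o series vs by apply: funext => k; rewrite /= Tser.
  by apply: cvg_comp cv _; apply: Tc.
have cvg_w : (fun k => w - ws k) @ \oo --> w.
  rewrite -[X in _ --> X]subr0; apply: cvgB; first exact: cvg_cst.
  apply/norm_cvg0P; apply: (@squeeze_cvgr _ _ _ _ (fun=> 0) (geometric m (2^-1))).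
  - by near=> k; rewrite normr_ge0 /= wsb.
  - exact: cvg_cst.
  - by apply: cvg_geometric; rewrite gtr0_norm ?invr_gt0 // invf_lt1 // ltr1n.
exact: cvg_unique _ cvg_Tv cvg_w.
Unshelve. all: by end_near.
Qed.

End bounded_inverse.

Section majorant.
Variables (R : realType) (f df : R -> R) (rad : R).
Hypothesis deriv_f : is_derivative_on f df rad.
Hypothesis df0 : df 0 = -1.
Hypothesis df_mono : {in `[0, rad[ &, {mono df : s t / s < t}}.

Lemma derivative_quotient_near s : 0 <= s < rad -> forall e : R, 0 < e ->
  exists2 d : R, 0 < d & forall q, 0 <= q < rad -> `|q - s| < d -> q != s ->
    `|df s - (f q - f s) / (q - s)| < e.
Proof.
move=> sr e e0; have /cvgrPdist_lt/(_ e e0) := deriv_f sr.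
rewrite /within /= => /nbhs_ballP [d d0 Hd].
by exists d => // q qr qs qns; apply: Hd => //; rewrite -ball_normE /= distrC.
Qed.

Lemma df_le a b : 0 <= a -> a <= b -> b < rad -> df a <= df b.
Proof.
move=> a0 ab br; have [->//|nab] := eqVneq a b.
apply: ltW; rewrite df_mono ?lt_neqAle ?nab ?in_itv /= ?a0 ?(le_lt_trans ab br) //.
by rewrite (le_trans a0 ab).
Qed.

Lemma df_ge_N1 a : 0 <= a < rad -> -1 <= df a.
Proof. by case/andP => a0 ar; rewrite -df0; apply: df_le. Qed.

(* [-f - id] is nonincreasing, since [f' >= -1]. *)
Lemma f_ge_f0_sub t : 0 <= t < rad -> f 0 - t <= f t.
Proof.
case/andP=> t0 tr.
suff : - f t - t <= - f 0 - 0 by lra.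
apply: (@locally_nonincreasing_le _ (fun s => - f s - s)) => // s /andP[s0 st] e e0.
have sr : 0 <= s < rad by rewrite s0 (le_lt_trans st tr).
have [d d0 Hd] := derivative_quotient_near sr e0.
exists d => // q /andP[q0 qt] qsd.
have [->|qs] := eqVneq q s; first by rewrite !subrr !mulr0.
have := Hd q ltac:(by rewrite q0 (le_lt_trans qt tr)) qsd qs.
set Q := (f q - f s) / (q - s); rewrite ltr_distl => /andP[_ Qlow].
have -> : f q = f s + Q * (q - s) by rewrite divfK ?subr_eq0 // addrC subrK.
have Q1e : 0 <= Q + 1 + e by have := df_ge_N1 sr; lra.
split => sq.
- by have := mulr_ge0 Q1e (ltac:(lra) : 0 <= q - s); lra.
- by have := mulr_ge0 Q1e (ltac:(lra) : 0 <= s - q); lra.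
Qed.

Hypothesis f0_gt0 : 0 < f 0.
Hypothesis f_neg : exists t, 0 < t < rad /\ f t < 0.

Let kappa_set := [set - f t / t | t in [set t | 0 < t < rad]].

Lemma kappa_set_le1 k : kappa_set k -> k <= 1.
Proof.
case=> t /andP[t0 tr] <-; rewrite ler_pdivrMr // mul1r.
by have := f_ge_f0_sub (ltac:(by rewrite ltW // tr) : 0 <= t < rad); have := f0_gt0; lra.
Qed.

Lemma has_sup_kappa_set : has_sup kappa_set.
Proof.
split; last by exists 1 => k /kappa_set_le1.
by case: f_neg => t [tr _]; exists (- f t / t); exists t.
Qed.

Lemma kappa_gt0 : 0 < kappa f rad.
Proof.
case: f_neg => t [/andP[t0 tr] ft].
apply: (@lt_le_trans _ _ (- f t / t)); first by rewrite divr_gt0 // oppr_gt0.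
by apply: sup_upper_bound; [exact: has_sup_kappa_set | exists t => //=; rewrite t0 tr].
Qed.

Lemma kappa_le1 : kappa f rad <= 1.
Proof. by apply: ge_sup; [case: has_sup_kappa_set | exact: kappa_set_le1]. Qed.

Hypothesis df_cont : {within `[0, rad[, continuous df}.

Let lambda_set := [set t | 0 <= t < rad /\ kappa f rad + df t < 0].

Lemma lambda_eq0 : ~ (exists t, lambda_set t) -> lambda f df rad = 0.
Proof.
move=> Lempty; rewrite /lambda -/lambda_set (_ : lambda_set = set0) ?sup0 //.
by apply/seteqP; split => t // Lt; apply: Lempty; exists t.
Qed.

Lemma lambda_ge0 : 0 <= lambda f df rad.
Proof.
have [[t Lt]|/lambda_eq0->//] := pselect (exists t, lambda_set t).
have [/andP[t0 _] _] := Lt; apply: le_trans t0 (sup_upper_bound _ Lt).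
by split; [exists t | exists rad => s [/andP[_ /ltW]]].
Qed.

Lemma df_lambda_le : lambda f df rad < rad -> df (lambda f df rad) <= - kappa f rad.
Proof.
move=> lam_rad; set lam := lambda f df rad.
have [[t0 Lt0]|/lambda_eq0 lam0] := pselect (exists t, lambda_set t); last first.
  by rewrite /lam lam0 df0 lerN2 kappa_le1.
have hs : has_sup lambda_set by split; [exists t0 | exists rad => s [/andP[_ /ltW]]].
(* [df] is continuous at [lam], and [df < - kappa] on points of [lambda_set] tending to [lam]. *)
rewrite leNgt; apply/negP => dflam.
have e0 : 0 < df lam + kappa f rad by lra.
have lamA : lam \in `[0, rad[ by rewrite in_itv /= lambda_ge0 lam_rad.
have /cvgrPdist_lt/(_ _ e0) := (subspace_continuousP _ _).1 df_cont lam lamA.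
rewrite /within /= => /nbhs_ballP [d d0 Hd].
have [t [/andP[t_ge0 tr] Lt] tl] := sup_adherent d0 hs.
rewrite (_ : sup lambda_set = lam) // in tl.
have tle : t <= lam by apply: sup_upper_bound => //; split; rewrite ?t_ge0.
have : `|df lam - df t| < df lam + kappa f rad.
  apply: Hd; last by rewrite /= in_itv /= t_ge0.
  by rewrite -ball_normE /= ger0_norm ?subr_ge0 //; lra.
rewrite ltr_distl; lra.
Qed.

Hypothesis df_convex : forall s t a : R, 0 <= s < rad -> 0 <= t < rad -> 0 <= a <= 1 ->
  df (a * s + (1 - a) * t) <= a * df s + (1 - a) * df t.

Lemma df_three_point a b c : 0 <= a -> a < b -> b < c -> c < rad ->
  df b * (c - a) <= df a * (c - b) + df c * (b - a).
Proof.
move=> a0 ab bc cr.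
pose w := (c - b) / (c - a).
have ca : 0 < c - a by lra.
have wE : w * (c - a) = c - b by rewrite /w divfK // gt_eqF.
have w01 : 0 <= w <= 1.
  by rewrite /w divr_ge0 ?ler_pdivrMr //=; lra.
have := df_convex (ltac:(lra) : 0 <= a < rad) (ltac:(lra) : 0 <= c < rad) w01.
have -> : w * a + (1 - w) * c = b by rewrite /w; field; rewrite gt_eqF.
have ba : b - a = (1 - w) * (c - a) by rewrite mulrBl mul1r wE; lra.
have -> : df a * (c - b) + df c * (b - a) = (w * df a + (1 - w) * df c) * (c - a).
  by rewrite ba -wE; ring.
by rewrite ler_pM2r.
Qed.

Let slope a b := (df a - df b) / (a - b).

Lemma slopeE a b : slope a b = (df b - df a) / (b - a).
Proof. by rewrite /slope -mulrNN -invrN !opprB. Qed.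

Lemma slope_le_left a b c : 0 <= a -> a < b -> b < c -> c < rad ->
  slope a c <= slope b c.
Proof.
move=> a0 ab bc cr; rewrite !slopeE ler_pdivrMr; last lra.
rewrite mulrAC ler_pdivlMr; last lra.
by have := df_three_point a0 ab bc cr; nra.
Qed.

Lemma slope_le_right a b c : 0 <= a -> a < b -> b < c -> c < rad ->
  slope a b <= slope a c.
Proof.
move=> a0 ab bc cr; rewrite !slopeE ler_pdivrMr; last lra.
rewrite mulrAC ler_pdivlMr; last lra.
by have := df_three_point a0 ab bc cr; nra.
Qed.

Lemma is_cvg_slope_left L : 0 < L -> L < rad -> cvg (slope^~ L @ L^'-).
Proof.
move=> L0 Lr; pose b := (L + rad) / 2.
have Lb : L < b by rewrite /b; lra.
have br : b < rad by rewrite /b; lra.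
apply: nondecreasing_at_left_is_cvgr.
  near=> x => y z; rewrite !in_itv /= => /andP[xy yL] /andP[_ zL] yz.
  have [->//|ne] := eqVneq y z.
  apply: slope_le_left => //; last by rewrite lt_neqAle ne.
  by apply: le_trans (ltW xy); near: x; apply: nbhs_left_ge.
near=> x; exists (slope L b) => _ [y /= + <-]; rewrite in_itv /= => /andP[xy yL].
have y0 : 0 <= y by apply: le_trans (ltW xy); near: x; apply: nbhs_left_ge.
exact: le_trans (slope_le_right y0 yL Lb br) (slope_le_left y0 yL Lb br).
Unshelve. all: by end_near.
Qed.

Lemma slope_le_left_deriv s L : 0 <= s -> s < L -> L < rad ->
  slope s L <= left_deriv df L.
Proof.
move=> s0 sL Lr; apply: limr_ge; first exact: is_cvg_slope_left (le_lt_trans s0 sL) Lr.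
near=> x; apply: slope_le_left => //; near: x; exact: nbhs_left_gt.
Unshelve. all: by end_near.
Qed.

Lemma df_sub_le_left_deriv a c L : 0 <= a -> a <= c -> c <= L -> L < rad ->
  df c - df a <= left_deriv df L * (c - a).
Proof.
move=> a0 ac cL Lr; have [->|ne] := eqVneq a c; first by rewrite !subrr mulr0.
have {ne}ac : a < c by rewrite lt_neqAle ne.
have : slope a c <= left_deriv df L.
  have [cLe|ne] := eqVneq c L; first by rewrite cLe in ac *; exact: slope_le_left_deriv.
  have cL' : c < L by rewrite lt_neqAle ne.
  apply: le_trans (slope_le_right a0 ac cL' Lr) _.
  by apply: slope_le_left_deriv => //; apply: lt_trans ac cL'.
by rewrite slopeE ler_pdivrMr ?subr_gt0 // mulrC.
Qed.

Lemma df_increment_le_chord s u r : 0 <= s -> 0 <= u -> s + u < rad -> 0 <= r <= 1 ->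
  (df (r * u + s) - df s) * u <= (df (s + u) - df s) * u * r.
Proof.
move=> s0 u0 sur /andP[r0 r1].
have := df_convex (ltac:(lra) : 0 <= s + u < rad) (ltac:(lra) : 0 <= s < rad)
  (ltac:(by rewrite r0 r1) : 0 <= r <= 1).
rewrite (_ : r * (s + u) + (1 - r) * s = r * u + s); last by ring.
by move=> /(ler_wpM2r u0); lra.
Qed.

Lemma df_increment_le_left_deriv s u r L : 0 <= s -> 0 <= u -> s + u <= L -> L < rad ->
  0 <= r <= 1 -> (df (r * u + s) - df s) * u <= left_deriv df L * u ^+ 2 * r.
Proof.
move=> s0 u0 suL Lr /andP[r0 r1]; have ru0 : 0 <= r * u by rewrite mulr_ge0.
have ruL : r * u + s <= L by nra.
move: (df_sub_le_left_deriv s0 (ler_wpDl ru0 (lexx s)) ruL Lr) => /(ler_wpM2r u0).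
by rewrite addrK; lra.
Qed.

End majorant.

Lemma diff_remainder_le (R : realType) (V W : normedModType R) (F : V -> W) (z : V) :
  differentiable F z -> forall e : R, 0 < e -> exists2 d : R, 0 < d &
  forall k, `|k| < d -> `|F (z + k) - F z - 'd F z k| <= e * `|k|.
Proof.
move=> dF e e0; have /eqaddoP/(_ e e0)/nbhs_norm0P[d d0 Hd] := diff_locally dF.
by exists d => // k /Hd; rewrite !fctE /= (addrC k) opprD addrA.
Qed.

Lemma ball_sub_interior (R : realType) (V : normedModType R) (C : set V) (x0 z : V) (r : R) :
  ball x0 r `<=` C -> `|x0 - z| < r -> interior C z.
Proof.
move=> HC zr; apply: (filterS HC); apply: open_nbhs_nbhs; split; first exact: ball_open.
by rewrite -ball_normE.
Qed.

Section newton_step.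
Variables (R : realType) (X Y : completeNormedModType R) (rad : R) (C : set X).
Variables (F : X -> Y) (x0 : X) (Finv : Y -> X) (df : R -> R).
Hypothesis F_diff : forall x, interior C x -> differentiable F x.
Hypothesis x0_int : interior C x0.
Hypotheses (FinvK : cancel ('d F x0) Finv) (dFK : cancel Finv ('d F x0)).
Hypothesis ball_C : ball x0 rad `<=` C.
Hypothesis dF_lip : forall x y : X, ball x0 rad x -> ball x0 rad y ->
  `|x - x0| + `|y - x| < rad -> forall v : X,
  `|Finv ('d F y v - 'd F x v)| <= (df (`|y - x| + `|x - x0|) - df `|x - x0|) * `|v|.
Hypothesis df0 : df 0 = -1.

Lemma FinvD u v : Finv (u + v) = Finv u + Finv v.
Proof. by rewrite -{1}(dFK u) -{1}(dFK v) -linearD FinvK. Qed.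

Lemma FinvN u : Finv (- u) = - Finv u.
Proof. by rewrite -{1}(dFK u) -linearN FinvK. Qed.

Lemma FinvB u v : Finv (u - v) = Finv u - Finv v.
Proof. by rewrite FinvD FinvN. Qed.

Lemma FinvZ (a : R) u : Finv (a *: u) = a *: Finv u.
Proof. by rewrite -{1}(dFK u) -linearZ FinvK. Qed.

Lemma Finv_dF_sub_le x v : `|x - x0| < rad ->
  `|Finv ('d F x v) - v| <= (df `|x - x0| + 1) * `|v|.
Proof.
move=> xr; have r0 : 0 < rad by apply: le_lt_trans xr.
have x0B : ball x0 rad x0 by rewrite -ball_normE /= subrr normr0.
have xB : ball x0 rad x by rewrite -ball_normE /= distrC.
have := dF_lip x0B xB ltac:(by rewrite subrr normr0 add0r) v.
by rewrite subrr normr0 addr0 df0 opprK FinvB FinvK.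
Qed.

Lemma Finv_dF_ge x v : `|x - x0| < rad -> - df `|x - x0| * `|v| <= `|Finv ('d F x v)|.
Proof.
move=> /(Finv_dF_sub_le v); have := ler_distD (Finv ('d F x v)) v 0.
by rewrite !subr0 distrC; nra.
Qed.

Lemma Finv_dF_le x v : `|x - x0| < rad -> `|Finv ('d F x v)| <= (2 + df `|x - x0|) * `|v|.
Proof.
move=> /(Finv_dF_sub_le v); have := ler_distD v (Finv ('d F x v)) 0.
by rewrite !subr0 distrC; nra.
Qed.

Variables (x xs : X).
Hypothesis su_rad : `|x - x0| + `|xs - x| < rad.

Lemma segment_dist_le r : 0 <= r <= 1 ->
  `|x + r *: (xs - x) - x0| <= `|x - x0| + r * `|xs - x|.
Proof.
case/andP=> r0 _; rewrite addrAC; apply: le_trans (ler_normD _ _) _.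
by rewrite normrZ ger0_norm.
Qed.

Lemma segment_in_ball r : 0 <= r <= 1 -> `|x + r *: (xs - x) - x0| < rad.
Proof.
move=> r01; apply: le_lt_trans (segment_dist_le r01) _.
case/andP: r01 => r0 r1; have := normr_ge0 (xs - x); have := su_rad; nra.
Qed.

Lemma is_derive_cc_Finv_F_segment :
  is_derive_cc (fun r => Finv (F (x + r *: (xs - x))))
               (fun r => Finv ('d F (x + r *: (xs - x)) (xs - x))) 0 1.
Proof.
have [c c0 Finv_le] := bounded_inverse (diff_continuous (F_diff x0_int)) FinvK dFK.
move=> r r01 e e0.
have zC : interior C (x + r *: (xs - x)).
  by apply: (ball_sub_interior ball_C); rewrite distrC; apply: segment_in_ball.
move: (xs - x) zC => d zC; set u := `|d|; set z := x + r *: d.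
have u10 : 0 < u + 1 by rewrite ltr_wpDl ?normr_ge0.
have e'0 : 0 < e / (c * (u + 1)) by rewrite divr_gt0 // mulr_gt0.
have [del del0 Hdel] := diff_remainder_le (F_diff zC) e'0.
exists (del / (u + 1)); first by rewrite divr_gt0.
move=> q _ qr; set k := (q - r) *: d.
have xk : x + q *: d = z + k by rewrite /z /k -addrA -scalerDl [r + _]addrC subrK.
have kE : `|k| = `|q - r| * u by rewrite /k normrZ.
have kdel : `|k| < del.
  move: qr; rewrite kE ltr_pdivlMr // => qr; apply: le_lt_trans qr.
  by rewrite ler_wpM2l ?normr_ge0 // lerDl.
rewrite xk; have -> : Finv (F (z + k)) - Finv (F z) - (q - r) *: Finv ('d F z d) =
    Finv (F (z + k) - F z - 'd F z k).
  by rewrite /k [in RHS]linearZ /= !FinvB FinvZ.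
apply: le_trans (Finv_le _) _; apply: le_trans (ler_wpM2l (ltW c0) (Hdel _ kdel)) _.
rewrite kE; have -> : c * (e / (c * (u + 1)) * (`|q - r| * u)) = e * `|q - r| * (u / (u + 1)).
  by field; rewrite !gt_eqF.
by rewrite ler_piMr ?mulr_ge0 ?(ltW e0) // ler_pdivrMr // mul1r lerDl.
Qed.

Lemma linearization_error_le (K : R) :
  (forall r, 0 <= r <= 1 ->
     (df (r * `|xs - x| + `|x - x0|) - df `|x - x0|) * `|xs - x| <= K * r) ->
  `|Finv (F xs - F x - 'd F x (xs - x))| <= K / 2.
Proof.
move=> Kle; set w := Finv ('d F x (xs - x)).
have := increment_le_half (K := K) (is_derive_ccB_linear w is_derive_cc_Finv_F_segment).
rewrite !scale1r !scale0r addr0 subr0 [x + _]addrC subrK addrAC /w -!FinvB.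
move=> -> // r r01.
have xB : ball x0 rad x.
  by rewrite -ball_normE /= distrC; have := normr_ge0 (xs - x); have := su_rad; lra.
have zB : ball x0 rad (x + r *: (xs - x)).
  by rewrite -ball_normE /= distrC; apply: segment_in_ball.
have zx : `|x + r *: (xs - x) - x| = r * `|xs - x|.
  by case/andP: r01 => r0 _; rewrite addrC addKr normrZ ger0_norm.
apply: le_trans (Kle r r01); rewrite /w -FinvB -zx.
apply: dF_lip => //; rewrite zx; have := normr_ge0 (xs - x); have := su_rad.
by case/andP: r01; nra.
Qed.

Lemma residual_le (y : X) (theta : R) : 0 <= theta -> F xs = 0 ->
  `|Finv (F x + 'd F x (y - x))| <= theta * `|Finv (F x)| ->
  - df `|x - x0| * `|xs - y| <=
    (1 + theta) * `|Finv (F xs - F x - 'd F x (xs - x))|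
    + theta * ((2 + df `|x - x0|) * `|xs - x|).
Proof.
move=> theta0 Fxs0 res; set e := `|Finv (F xs - F x - 'd F x (xs - x))|.
have xr : `|x - x0| < rad by have := normr_ge0 (xs - x); have := su_rad; lra.
have lin_xs : F x + 'd F x (xs - x) = - (F xs - F x - 'd F x (xs - x)).
  by rewrite Fxs0 sub0r -opprD opprK.
have dF_yxs : 'd F x (y - xs) = (F x + 'd F x (y - x)) + (F xs - F x - 'd F x (xs - x)).
  rewrite -[F xs - F x - _]opprK -lin_xs opprD addrACA subrr add0r -linearB.
  by rewrite opprB addrA subrK.
have res_e : - df `|x - x0| * `|xs - y| <= theta * `|Finv (F x)| + e.
  rewrite [`|xs - y|]distrC; apply: le_trans (Finv_dF_ge (y - xs) xr) _.
  rewrite dF_yxs FinvD; apply: le_trans (ler_normD _ _) _.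
  by rewrite lerD2r.
have Fx_le : `|Finv (F x)| <= e + (2 + df `|x - x0|) * `|xs - x|.
  have -> : F x = - ((F xs - F x - 'd F x (xs - x)) + 'd F x (xs - x)).
    by rewrite subrK Fxs0 sub0r opprK.
  rewrite FinvN normrN FinvD; apply: le_trans (ler_normD _ _) _.
  by rewrite lerD2l Finv_dF_le.
have := ler_wpM2l theta0 Fx_le; lra.
Qed.

End newton_step.

Section newton_bounds.
Variable R : realFieldType.

Lemma newton_bound_kappa (theta kap ds dsu e u A : R) :
  0 <= theta -> 0 <= u -> 0 < kap -> ds <= dsu -> dsu <= - kap ->
  e <= (dsu - ds) * u / 2 ->
  - ds * A <= (1 + theta) * e + theta * ((2 + ds) * u) ->
  A <= ((1 + theta) / 2 + 2 * theta / kap) * u.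
Proof.
move=> theta0 u0 kap0 ds_dsu dsu_kap e_le residual.
have a0 : 0 < - ds by lra.
have a_kap : 1 <= - ds / kap by rewrite ler_pdivlMr // mul1r; lra.
have dsu_u : dsu * u <= 0 by rewrite mulr_le0_ge0 //; lra.
have e_le' : (1 + theta) * e <= (1 + theta) * (- ds * u / 2).
  apply: ler_wpM2l; first lra.
  have : (dsu - ds) * u / 2 = dsu * u / 2 + - ds * u / 2 by ring.
  lra.
have tu_le : 2 * (theta * u) <= 2 * (theta * u) * (- ds / kap).
  by rewrite ler_peMr // !mulr_ge0.
rewrite -(ler_pM2l a0).
have -> : - ds * (((1 + theta) / 2 + 2 * theta / kap) * u) =
    (1 + theta) * (- ds * u / 2) + 2 * (theta * u) * (- ds / kap).
  by field; rewrite gt_eqF.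
have : 0 <= theta * u * - ds by rewrite !mulr_ge0 //; lra.
have : theta * ((2 + ds) * u) = 2 * (theta * u) - theta * u * - ds by ring.
lra.
Qed.

Lemma newton_bound_left_deriv (theta ds dl D e u A : R) :
  0 <= theta -> 0 <= u -> 0 <= e -> ds <= dl -> dl < 0 ->
  e <= D * u ^+ 2 / 2 ->
  - ds * A <= (1 + theta) * e + theta * ((2 + ds) * u) ->
  A <= ((1 + theta) / 2 * (D / `|dl|) * u + theta * ((2 + dl) / `|dl|)) * u.
Proof.
move=> theta0 u0 e0 ds_dl dl0 e_le residual; rewrite ltr0_norm //.
have a0 : 0 < - ds by lra.
have a_b : 1 <= - ds / - dl by rewrite ler_pdivlMr ?mul1r; lra.
have P0 : 0 <= (1 + theta) / 2 * (D * u ^+ 2) by rewrite mulr_ge0 //; lra.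
have P_le : (1 + theta) / 2 * (D * u ^+ 2) <= (1 + theta) / 2 * (D * u ^+ 2) * (- ds / - dl).
  by rewrite ler_peMr.
have tu_le : theta * u * (2 + ds) <= theta * u * (2 * (- ds / - dl) + ds).
  by apply: ler_wpM2l; [rewrite mulr_ge0 | lra].
have e_le' : (1 + theta) * e <= (1 + theta) * (D * u ^+ 2 / 2) by apply: ler_wpM2l; lra.
rewrite -(ler_pM2l a0).
have -> : - ds * (((1 + theta) / 2 * (D / - dl) * u + theta * ((2 + dl) / - dl)) * u) =
    (1 + theta) / 2 * (D * u ^+ 2) * (- ds / - dl) + theta * u * (2 * (- ds / - dl) + ds).
  by field; rewrite lt_eqF.
have : theta * ((2 + ds) * u) = theta * u * (2 + ds) by ring.
lra.
Qed.

End newton_bounds.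

Theorem lemma3p7 (R : realType) (X Y : completeNormedModType R)
  (rad : R) (C : set X) (F : X -> Y) (x0 : X) (Finv : Y -> X)
  (f df : R -> R) :
  {within C, continuous F} ->
  (forall x, interior C x -> differentiable F x) ->
  (forall x, interior C x -> forall eps : R, 0 < eps -> exists2 del : R, 0 < del &
     forall y, interior C y -> `|y - x| < del ->
       forall v : X, `|'d F y v - 'd F x v| <= eps * `|v|) ->
  interior C x0 ->
  cancel ('d F x0) Finv -> cancel Finv ('d F x0) ->
  is_derivative_on f df rad ->
  {within `[0, rad[, continuous df} ->
  ball x0 rad `<=` C ->
  (forall x y : X, ball x0 rad x -> ball x0 rad y ->
     `|x - x0| + `|y - x| < rad ->
     forall v : X, `|Finv ('d F y v - 'd F x v)| <=
       (df (`|y - x| + `|x - x0|) - df `|x - x0|) * `|v|) ->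
  `|Finv (F x0)| <= f 0 ->
  0 < f 0 -> df 0 = -1 ->
  {in `[0, rad[ &, {mono df : s t / s < t}} ->
  (forall s t a : R, 0 <= s < rad -> 0 <= t < rad -> 0 <= a <= 1 ->
     df (a * s + (1 - a) * t) <= a * df s + (1 - a) * df t) ->
  (exists t, 0 < t < rad /\ f t < 0) ->
  forall (theta t : R) (xs x y : X),
  0 <= theta -> 0 <= t <= lambda f df rad ->
  lambda f df rad < rad ->
  `|x - x0| <= t -> `|xs - x| <= lambda f df rad - t -> F xs = 0 ->
  `|Finv (F x + 'd F x (y - x))| <= theta * `|Finv (F x)| ->
  `|xs - y| <= ((1 + theta) / 2 + 2 * theta / kappa f rad) * `|xs - x| /\
  `|xs - y| <=
    ((1 + theta) / 2 * (left_deriv df (lambda f df rad) / `|df (lambda f df rad)|)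
        * `|xs - x|
     + theta * ((2 + df (lambda f df rad)) / `|df (lambda f df rad)|)) * `|xs - x|.
Proof.
move=> _ F_diff _ x0_int FinvK dFK deriv_f df_cont ball_C dF_lip _ f0_gt0 df0 df_mono
  df_convex f_neg theta t xs x y theta0 /andP[t0 t_lam] lam_rad xx0 xsx Fxs res.
set lam := lambda f df rad in t_lam lam_rad xsx *.
have kap0 := kappa_gt0 deriv_f df0 df_mono f0_gt0 f_neg.
have dl_kap := df_lambda_le deriv_f df0 df_mono f0_gt0 f_neg df_cont lam_rad.
set s := `|x - x0| in xx0 *; set u := `|xs - x| in xsx *.
have [s0 u0] : 0 <= s /\ 0 <= u by rewrite !normr_ge0.
have [su_lam su_rad] : s + u <= lam /\ s + u < rad by split; lra.
have ds_dsu : df s <= df (s + u) by apply: (df_le df_mono); lra.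
have dsu_dl : df (s + u) <= df lam by apply: (df_le df_mono); lra.
have err_le := linearization_error_le F_diff x0_int FinvK dFK ball_C dF_lip su_rad.
have res_le := residual_le FinvK dFK dF_lip df0 su_rad theta0 Fxs res.
split.
- apply: (newton_bound_kappa theta0 u0 kap0 ds_dsu (le_trans dsu_dl dl_kap) _ res_le).
  by apply: err_le => r; apply: (df_increment_le_chord df_convex).
- have dl0 : df lam < 0 by apply: le_lt_trans dl_kap _; rewrite oppr_lt0.
  apply: (newton_bound_left_deriv theta0 u0 (normr_ge0 _) (le_trans ds_dsu dsu_dl) dl0 _ res_le).
  by apply: err_le => r; apply: (df_increment_le_left_deriv df_convex).
Qed.
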